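(* Let $0<\gamma\le 1/2$, let $(x,z)$ be an optimal extreme point solution of LP-CVRP-MD, run the sampling procedure described in the context, and let $U$ be the set of clients that do not lie on any sampled branching. Then $\mathbb E[\ell(U)] \le e^{-\gamma}\cdot \mathrm{lb}$, where $\ell_v = \frac{2}{k}c(v,R)$, $\ell(S)=\sum_{v\in S}\ell_v$, and $\mathrm{lb}=\ell(C)$.
   Context: Problem: nonempty disjoint finite sets $C$ (clients) and $R$ (depots), $V = C\cup R$, a metric $c$ on $V$, integer capacity $k \ge 3$; $c(v,R):=\min_{r\in R}c(v,r)>0$ for every client $v$. Work in the complete bidirected graph on $V$ (directed edges $(a,b)$ of cost $c(a,b)$); for a vector $y$ on directed edges and $S\subseteq V$, $y(\delta^{in}(S))$, $y(\delta^{out}(S))$ are sums over edges entering/leaving $S$. LP-CVRP-MD has variables $x^r_{v,e}\ge 0$ ($r\in R$, $v\in C$, $e$ a directed edge) and $z^r_{v,u}\ge0$ ($r\in R$, $v\in C$, $u\in V$), objective: minimize $\sum_{r,v,e} c(e)x^r_{v,e}$, constraints: (1) $x^r_v(\delta^{out}(u))$ is $2z^r_{v,v}$ if $u=r$, $0$ if $u=v$, $z^r_{v,u}$ otherwise; (2) $x^r_v(\delta^{in}(u))$ is $0$ if $u=r$, $2z^r_{v,v}$ if $u=v$, $z^r_{v,u}$ otherwise (for all $r\in R,v\in C,u\in V$); (3) $x^r_v(\delta^{in}(S))\ge z^r_{v,u}$ whenever $u\in S\subseteq V\setminus\{r\}$; (4) $\sum_{r\in R}\sum_{v\in C} z^r_{v,u}=1$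 for all $u\in C$; (5) $z^r_{v,u}\le z^r_{v,v}$ for $u,v\in C$; (6) $z^r_{v,u}=0$ if $u,v\in C$ and $c(u,r)>c(v,r)$; (7) $\sum_{u\in C}z^r_{v,u}\le k z^r_{v,v}$. An $r$-branching is a tree rooted at $r$ oriented away from $r$. Sampling procedure: for each $r\in R$, $v\in C$, take $r$-branchings $B_1,B_2,\dots$ (finitely many) with weights $\mu_i\ge0$, $\sum_i\mu_i = 2\gamma z^r_{v,v}$, such that every directed edge $e$ lies in branchings of total weight at most $\gamma x^r_{v,e}$, $v$ lies on every $B_i$, and every client $u\neq v$ lies in branchings of total weight at least $\gamma z^r_{v,u}$ (such a decomposition exists by a theorem of Bang-Jensen, Frank and Jackson). Independently (over all $r,v,i$) include each $B_i$ with probability $\mu_i$. *)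

From HB Require Import structures.
From mathcomp Require Import all_boot all_order all_algebra.
From mathcomp Require Import reals sequences exp.
Set Implicit Arguments. Unset Strict Implicit. Unset Printing Implicit Defensive.
Import Order.TTheory GRing.Theory Num.Theory.
Local Open Scope ring_scope.

Section CVRPMD.
Variables (R : realType) (Cl Dp : finType).
(* V = C ⊔ R : clients are [inl u], depots are [inr r]. *)
Local Notation V := (Cl + Dp)%type.

Definition edge := {e : V * V | e.1 != e.2}.

Definition ecost (c : V -> V -> R) (e : edge) : R := c (val e).1 (val e).2.

Definition yin (y : edge -> R) (S : {set V}) : R :=
  \sum_(e : edge | ((val e).1 \notin S) && ((val e).2 \in S)) y e.
Definition yout (y : edge -> R) (S : {set V}) : R :=
  \sum_(e : edge | ((val e).1 \in S) && ((val e).2 \notin S)) y e.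

Definition metric (c : V -> V -> R) : Prop :=
  [/\ forall a b, 0 <= c a b, forall a, c a a = 0,
      forall a b, c a b = c b a & forall a b d, c a d <= c a b + c b d].

(* c(v,R) = min_{r in R} c(v,r)  (0 if there is no depot) *)
Definition distR (c : V -> V -> R) (v : Cl) : R :=
  match [pick r : Dp] with
  | Some r0 => \big[Num.min/c (inl v) (inr r0)]_(r : Dp) c (inl v) (inr r)
  | None => 0
  end.

(* LP-CVRP-MD: x r v e = x^r_{v,e},  z r v u = z^r_{v,u} *)
Definition lp_feasible (k : nat) (c : V -> V -> R)
    (x : Dp -> Cl -> edge -> R) (z : Dp -> Cl -> V -> R) : Prop :=
  (forall r v e, 0 <= x r v e) /\
  (forall r v u, 0 <= z r v u) /\
  (forall r v u, yout (x r v) [set u] =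
     if u == inr r then 2 * z r v (inl v)
     else if u == inl v then 0 else z r v u) /\
  (forall r v u, yin (x r v) [set u] =
     if u == inr r then 0
     else if u == inl v then 2 * z r v (inl v) else z r v u) /\
  (forall r v (S : {set V}) u, u \in S -> inr r \notin S ->
     z r v u <= yin (x r v) S) /\
  (* (4) *)
  (forall u : Cl, \sum_(r : Dp) \sum_(v : Cl) z r v (inl u) = 1) /\
  (forall r (u v : Cl), z r v (inl u) <= z r v (inl v)) /\
  (forall r (u v : Cl), c (inl v) (inr r) < c (inl u) (inr r) ->
     z r v (inl u) = 0) /\
  (forall r v, \sum_(u : Cl) z r v (inl u) <= k%:R * z r v (inl v)).

Definition lp_obj (c : V -> V -> R) (x : Dp -> Cl -> edge -> R) : R :=
  \sum_(r : Dp) \sum_(v : Cl) \sum_(e : edge) ecost c e * x r v e.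

Definition lp_optimal k c x z : Prop :=
  lp_feasible k c x z /\
  forall x' z', lp_feasible k c x' z' -> lp_obj c x <= lp_obj c x'.

Definition lp_extreme k c x z : Prop :=
  lp_feasible k c x z /\
  forall x1 z1 x2 z2 (lam : R),
    lp_feasible k c x1 z1 -> lp_feasible k c x2 z2 -> 0 < lam -> lam < 1 ->
    (forall r v e, x r v e = lam * x1 r v e + (1 - lam) * x2 r v e) ->
    (forall r v u, z r v u = lam * z1 r v u + (1 - lam) * z2 r v u) ->
    (forall r v e, x1 r v e = x2 r v e) /\ (forall r v u, z1 r v u = z2 r v u).

(* branchings: an edge set B, vertex set = root plus endpoints *)
Definition bverts (r : V) (B : {set edge}) : {set V} :=
  r |: ([set (val e).1 | e in B] :|: [set (val e).2 | e in B]).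

Definition brel (B : {set edge}) : rel V :=
  fun a b => [exists e in B, val e == (a, b)].

Definition is_branching (r : V) (B : {set edge}) : Prop :=
  (forall e, e \in B -> (val e).2 != r) /\
  (forall w, w \in bverts r B -> w != r ->
     #|[set e in B | (val e).2 == w]| = 1%N) /\
  (forall w, w \in bverts r B -> connect (brel B) r w).

Variables (I : finType) (own : I -> Dp * Cl) (B : I -> {set edge}) (mu : I -> R).
(* all sampled-branching indices i, each belonging to the pair own i = (r,v) *)

Definition on_branch (i : I) (w : V) : bool := w \in bverts (inr (own i).1) (B i).

Definition valid_decomp (gamma : R) (x : Dp -> Cl -> edge -> R)
    (z : Dp -> Cl -> V -> R) : Prop :=
  (forall i, 0 <= mu i) /\
  (forall i, is_branching (inr (own i).1) (B i)) /\
  (forall i, on_branch i (inl (own i).2)) /\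
  (forall r v, \sum_(i | own i == (r, v)) mu i = 2 * gamma * z r v (inl v)) /\
  (forall r v e, \sum_(i | (own i == (r, v)) && (e \in B i)) mu i
                   <= gamma * x r v e) /\
  (forall r v (u : Cl), u != v ->
     gamma * z r v (inl u) <= \sum_(i | (own i == (r, v)) && on_branch i (inl u)) mu i).

Definition uncovered (S : {set I}) : {set Cl} :=
  [set u | [forall i in S, ~~ on_branch i (inl u)]].

(* probability of sampling exactly S under independent inclusion *)
Definition sample_prob (S : {set I}) : R :=
  (\prod_(i in S) mu i) * \prod_(i in ~: S) (1 - mu i).

Definition ell (k : nat) (c : V -> V -> R) (u : Cl) : R := 2 / k%:R * distR c u.
Definition ellS k c (A : {set Cl}) : R := \sum_(u in A) ell k c u.

Definition expected_ell_uncovered k c : R :=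
  \sum_(S : {set I}) sample_prob S * ellS k c (uncovered S).

Definition lb k c : R := ellS k c [set: Cl].

End CVRPMD.

From HB Require Import structures.
From mathcomp Require Import all_boot all_order all_algebra.
From mathcomp Require Import reals sequences exp.
From mathcomp Require Import lra.
Set Implicit Arguments. Unset Strict Implicit. Unset Printing Implicit Defensive.
Import Order.TTheory GRing.Theory Num.Theory.
Local Open Scope ring_scope.

(* A client u is missed only if none of the independently sampled branchings
   through u is chosen, which happens with probability prod_i (1 - mu_i)
   <= exp (- sum_i mu_i).  Summing the coverage guarantee of the decomposition
   against constraint (4), sum_{r,v} z^r_{v,u} = 1, shows that the branchings
   through u have total weight at least gamma, so u is missed with probability
   at most e^-gamma; linearity of expectation finishes the proof. *)

Lemma sum_prod_bernoulli_avoid (R : comPzRingType) (I : finType) (p : I -> R)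
    (P : pred I) :
  \sum_(S : {set I} | [forall i in S, ~~ P i])
     (\prod_(i in S) p i) * \prod_(i in ~: S) (1 - p i)
  = \prod_(i | P i) (1 - p i).
Proof.
rewrite big_mkcond [RHS]big_mkcond /=.
transitivity (\prod_i ((if P i then 0 else p i) + (1 - p i))); last first.
  by apply: eq_bigr => i _; case: (P i); rewrite ?add0r // addrC subrK.
rewrite bigA_distr; apply: eq_bigr => S _.
rewrite [RHS](bigID (mem S)) /=.
rewrite [X in _ = X * _](eq_bigr (fun i => if P i then 0 else p i)); last first.
  by move=> i ->.
rewrite [X in _ = _ * X](eq_bigr (fun i => 1 - p i)); last first.
  by move=> i /negbTE ->.
rewrite [X in _ = _ * X](eq_bigl (mem (~: S))); last first.
  by move=> i; rewrite !inE.
case: ifPn => [/forall_inP avoid|/forall_inPn[i iS /negbNE Pi]].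
  congr (_ * _); apply: eq_bigr => i iS.
  by rewrite (negbTE (avoid i iS)).
by rewrite (bigD1 i) //= Pi !mul0r.
Qed.

Lemma prod_1subr_le_expR (R : realType) (I : finType) (P : pred I) (a : I -> R) :
    (forall i, P i -> 0 <= a i <= 1) ->
  \prod_(i | P i) (1 - a i) <= expR (- \sum_(i | P i) a i).
Proof.
move=> a01; rewrite -sumrN expR_sum.
apply: ler_prod => i /a01 /andP[a0 a1]; rewrite subr_ge0 a1.
exact: expR_ge1Dx.
Qed.

Lemma ell_ge0 (R : realType) (Cl Dp : finType) (k : nat)
    (c : (Cl + Dp)%type -> (Cl + Dp)%type -> R) (u : Cl) :
  0 <= distR c u -> 0 <= ell k c u.
Proof. by move=> d0; rewrite /ell mulr_ge0 // divr_ge0 ?ler0n. Qed.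

Section UncoveredClients.

Variables (R : realType) (Cl Dp I : finType).
Variables (own : I -> Dp * Cl) (B : I -> {set edge Cl Dp}) (mu : I -> R).

Lemma expected_ell_uncoveredE k c :
  expected_ell_uncovered own B mu k c
  = \sum_(u : Cl) ell k c u * \prod_(i | on_branch own B i (inl u)) (1 - mu i).
Proof.
rewrite /expected_ell_uncovered /ellS.
under eq_bigr do rewrite big_mkcond mulr_sumr.
rewrite exchange_big; apply: eq_bigr => u _.
rewrite -sum_prod_bernoulli_avoid mulr_sumr [RHS]big_mkcond.
apply: eq_bigr => S _; rewrite in_set.
by case: ifP; rewrite ?mulr0 // mulrC.
Qed.

Variables (gamma : R) (x : Dp -> Cl -> edge Cl Dp -> R).
Variables (z : Dp -> Cl -> (Cl + Dp)%type -> R).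
Hypothesis z_ge0 : forall r v u, 0 <= z r v u.
Hypothesis z_assign : forall u : Cl, \sum_(r : Dp) \sum_(v : Cl) z r v (inl u) = 1.
Hypothesis decomp : valid_decomp own B mu gamma x z.

Lemma z_diag_le1 r v : z r v (inl v) <= 1.
Proof.
rewrite -(z_assign v) (bigD1 r) //= (bigD1 v) //= -addrA lerDl.
by rewrite addr_ge0 ?sumr_ge0 // => *; rewrite ?sumr_ge0.
Qed.

Lemma mu_le1 : gamma <= 1 / 2 -> forall i, mu i <= 1.
Proof.
have [mu0 [_ [_ [mu_sum _]]]] := decomp.
move=> g12 i; case Ei: (own i) => [r v].
have : \sum_(j | own j == (r, v)) mu j <= 1.
  rewrite mu_sum; have := z_diag_le1 r v; have := z_ge0 r v (inl v); nra.
by apply: le_trans; rewrite (bigD1 i) ?Ei //= lerDl sumr_ge0.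
Qed.

(* The client u is covered either as the centre v = u of a pair (r, u), whose
   branchings all contain u and weigh 2 gamma z^r_{u,u}, or as an ordinary
   client of a pair (r, v) with v != u. *)
Lemma weight_through_client_ge (u : Cl) :
  0 <= gamma -> gamma <= \sum_(i | on_branch own B i (inl u)) mu i.
Proof.
have [_ [_ [centre_on [mu_sum [_ client_cov]]]]] := decomp.
move=> g0; rewrite (partition_big own predT) //=.
rewrite -(pair_bigA _ (fun r v =>
  \sum_(i | on_branch own B i (inl u) && (own i == (r, v))) mu i)) /=.
rewrite -[leLHS]mulr1 -(z_assign u) mulr_sumr; apply: ler_sum => r _.
rewrite mulr_sumr; apply: ler_sum => v _.
have [->|vu] := eqVneq v u.
  rewrite (eq_bigl (fun i => own i == (r, u))); last first.
    move=> i; case Ei: (own i == (r, u)); rewrite ?andbF ?andbT //.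
    by have := centre_on i; rewrite (eqP Ei).
  by rewrite mu_sum; have := z_ge0 r u (inl u); nra.
rewrite (eq_bigl (fun i => (own i == (r, v)) && on_branch own B i (inl u))).
  by apply: client_cov; rewrite eq_sym.
by move=> i; rewrite andbC.
Qed.

End UncoveredClients.

Theorem lemma4 (R : realType) (Cl Dp : finType) (c : (Cl + Dp)%type -> (Cl + Dp)%type -> R)
    (k : nat) (gamma : R)
    (x : Dp -> Cl -> edge Cl Dp -> R) (z : Dp -> Cl -> (Cl + Dp)%type -> R)
    (I : finType) (own : I -> Dp * Cl) (B : I -> {set edge Cl Dp}) (mu : I -> R) :
  (0 < #|Cl|)%N -> (0 < #|Dp|)%N -> metric c -> (3 <= k)%N ->
  (forall v : Cl, 0 < distR c v) ->
  0 < gamma -> gamma <= 1 / 2 ->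
  lp_optimal k c x z -> lp_extreme k c x z ->
  valid_decomp own B mu gamma x z ->
  expected_ell_uncovered own B mu k c <= expR (- gamma) * lb k c.
Proof.
move=> _ _ _ _ dist_gt0 g0 g12 [[_ [z_ge0 [_ [_ [_ [z_assign _]]]]]] _] _ decomp.
have [mu_ge0 _] := decomp.
have mu01 i : 0 <= mu i <= 1.
  by rewrite mu_ge0 (mu_le1 z_ge0 z_assign decomp g12).
rewrite expected_ell_uncoveredE /lb /ellS mulr_sumr.
under [X in _ <= X]eq_bigl do rewrite in_setT.
apply: ler_sum => u _; rewrite mulrC.
apply: ler_wpM2r; first exact/ell_ge0/ltW.
apply: le_trans (prod_1subr_le_expR (fun i _ => mu01 i)) _.
rewrite ler_expR lerN2.
exact: (weight_through_client_ge z_ge0 z_assign decomp _ (ltW g0)).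
Qed.
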